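(* Let $A$ be a nonnegative column-stochastic $n\times m$ matrix. If $\operatorname{rank}_+(A)\leqslant r$, then there is a polytope $P$ satisfying $\mathcal{P}_{in}(A)\subset P\subset\mathcal{P}_{out}(A)$ and $\operatorname{ic}(P)\leqslant r$.
   Context: $\operatorname{rank}_+(A)$ is the smallest $k$ such that $A$ is a sum of $k$ nonnegative rank-one matrices. A matrix is column-stochastic if each column has entries summing to $1$; so the columns of a nonnegative column-stochastic matrix lie in the standard simplex $\Delta_n=\{x\in\mathbb{R}^n: x_1+\cdots+x_n=1,\ x_i\geqslant 0\}$. $\operatorname{col}(A)$ is the linear span of the columns of $A$; $\mathcal{P}_{out}(A)=\Delta_n\cap\operatorname{col}(A)$ and $\mathcal{P}_{in}(A)$ is the convex hull of the columns of $A$. For polytopes $P\subset\mathbb{R}^d$ and $Q\subset\mathbb{R}^N$ ($N\geqslant d$), $P$ is a slice of $Q$ if $P\times\{0\}=Q\cap H$ where $H=\{x\in\mathbb{R}^N: x_{d+1}=\cdots=x_N=0\}$ (identifying $\mathbb{R}^d$ with $H$). The intersection complexity $\operatorname{ic}(P)$ is the smallest integer $k$ such that $P$ is a slice of a polytope with $k$ vertices. *)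

From HB Require Import structures.
From mathcomp Require Import all_boot all_order all_algebra.
Set Implicit Arguments. Unset Strict Implicit. Unset Printing Implicit Defensive.
Import Order.TTheory GRing.Theory Num.Theory.
Local Open Scope ring_scope.

Section Defs.
Variable R : realFieldType.

Definition nonneg_mx (p q : nat) (B : 'M[R]_(p, q)) : Prop :=
  forall i j, 0 <= B i j.

Definition col_stochastic (n m : nat) (A : 'M[R]_(n, m)) : Prop :=
  nonneg_mx A /\ forall j, \sum_i A i j = 1.

Definition nonneg_rank_le (n m : nat) (A : 'M[R]_(n, m)) (r : nat) : Prop :=
  exists k : nat, (k <= r)%N /\
    exists B : 'I_k -> 'M[R]_(n, m),
      (forall i, nonneg_mx (B i) /\ \rank (B i) = 1%N) /\ A = \sum_(i < k) B i.

Definition conv (d k : nat) (M : 'M[R]_(d, k)) (x : 'cV[R]_d) : Prop :=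
  exists l : 'cV[R]_k, (forall i, 0 <= l i 0) /\ \sum_i l i 0 = 1 /\ x = M *m l.

Definition is_polytope (d : nat) (P : 'cV[R]_d -> Prop) : Prop :=
  exists k (M : 'M[R]_(d, k)), forall x, P x <-> conv M x.

Definition extreme (d : nat) (Q : 'cV[R]_d -> Prop) (x : 'cV[R]_d) : Prop :=
  Q x /\ forall y z t, Q y -> Q z -> 0 < t -> t < 1 ->
    x = t *: y + (1 - t) *: z -> y = x /\ z = x.

Definition polytope_with_vertices (N : nat) (Q : 'cV[R]_N -> Prop) (k : nat) : Prop :=
  is_polytope Q /\
  exists V : 'M[R]_(N, k), injective (fun j : 'I_k => col j V) /\
    forall x, extreme Q x <-> exists j, x = col j V.

Definition slice (d e : nat) (P : 'cV[R]_d -> Prop) (Q : 'cV[R]_(d + e) -> Prop) : Prop :=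
  forall x : 'cV[R]_(d + e),
    (Q x /\ dsubmx x = 0) <-> (P (usubmx x) /\ dsubmx x = 0).

Definition ic_le (d : nat) (P : 'cV[R]_d -> Prop) (r : nat) : Prop :=
  exists (e k : nat) (Q : 'cV[R]_(d + e) -> Prop),
    (k <= r)%N /\ polytope_with_vertices Q k /\ slice P Q.

Definition simplex (n : nat) (x : 'cV[R]_n) : Prop :=
  (forall i, 0 <= x i 0) /\ \sum_i x i 0 = 1.

Definition P_out (n m : nat) (A : 'M[R]_(n, m)) (x : 'cV[R]_n) : Prop :=
  simplex x /\ exists y : 'cV[R]_m, x = A *m y.

Definition P_in (n m : nat) (A : 'M[R]_(n, m)) (x : 'cV[R]_n) : Prop := conv A x.

End Defs.

(* Write [A = U W] with [U] and [W] nonnegative and column-stochastic and [U]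
   of width [k <= r], and let [L] be a matrix whose kernel is [col A]. Take
   [P = U S] with [S = {l in Delta_k | L U l = 0}]: it contains the columns
   [U W_j] of [A], and [U] maps [S] into [Delta_n] and into [ker L = col A].
   Moreover [P x {0}] is the slice [{z = 0}] of [conv [U; L U]], a polytope
   whose vertices are among its [k] generators. Finally [S] is a polytope:
   a point of [S] is either the only point of [S] with its support, or it
   lies strictly inside a segment of [S] joining two points of smaller
   support, so by induction [S] is the convex hull of these finitely many
   basic solutions. *)

From HB Require Import structures.
From mathcomp Require Import all_boot all_order all_algebra.
From mathcomp Require Import ring lra.
From Stdlib Require Import Classical.
Import Order.TTheory GRing.Theory Num.Theory.
Set Implicit Arguments. Unset Strict Implicit. Unset Printing Implicit Defensive.
Local Open Scope ring_scope.

Lemma exists_uniq_filter (T : eqType) (Q : T -> Prop) (s : seq T) :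
  exists2 w, uniq w /\ (size w <= size s)%N & forall x, x \in w <-> x \in s /\ Q x.
Proof.
elim: s => [|c s [w [wu ws] Hw]].
  by exists [::] => // x; rewrite in_nil; split => // -[].
have [[Qc cw]|Hn] := classic (Q c /\ c \notin w).
  exists (c :: w); first by rewrite /= cw wu ltnS.
  move=> x; rewrite !inE; split.
    by case/orP => [/eqP ->|/Hw [-> Qx]]; rewrite ?eqxx ?orbT.
  by case=> /orP [/eqP ->|xs] Qx; rewrite ?eqxx //; apply/orP; right; apply/Hw.
exists w; first by rewrite wu (leq_trans ws).
move=> x; rewrite inE; split; first by move/Hw => [-> Qx]; rewrite orbT.
case=> /orP [/eqP ->|xs] Qx; last by apply/Hw.
by apply: NNPP => cw; apply: Hn; split => //; apply/negP.
Qed.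

Lemma exists_seq_of_unique (I : finType) (T : eqType) (P : I -> T -> Prop) :
  (forall i x y, P i x -> P i y -> x = y) ->
  exists s : seq T, (forall x, x \in s -> exists i, P i x) /\
                    (forall i x, P i x -> x \in s).
Proof.
move=> P_uniq.
suff [s [sP Ps]] : exists s : seq T, (forall x, x \in s -> exists i, P i x) /\
                   (forall i x, i \in enum I -> P i x -> x \in s).
  by exists s; split=> // i x; apply: Ps; rewrite mem_enum.
elim: (enum I) => [|i0 e [s [sP Ps]]]; first by exists [::].
have [[x0 Px0]|Hn] := classic (exists x, P i0 x).
  exists (x0 :: s); split=> [x|i x].
    by rewrite inE => /orP[/eqP ->|/sP//]; exists i0.
  rewrite !inE => /orP[/eqP ->|ie] Px; first by rewrite (P_uniq _ _ _ Px Px0) eqxx.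
  by rewrite (Ps i) ?orbT.
exists s; split=> // i x; rewrite inE => /orP[/eqP -> Px|]; last exact: Ps.
by case: Hn; exists x.
Qed.

Section Convexity.
Variable R : realFieldType.

Lemma convE d k (M : 'M[R]_(d, k)) x : conv M x <-> exists2 l, simplex l & x = M *m l.
Proof. by split=> [[l [l0 [l1 ->]]]|[l [l0 l1] ->]]; exists l. Qed.

Lemma sum_mulmx_col p q k (U : 'M[R]_(p, q)) (W : 'M[R]_(q, k)) j :
  (forall t, \sum_a U a t = 1) -> \sum_a (U *m W) a j = \sum_t W t j.
Proof.
move=> U1; under eq_bigr do rewrite mxE.
by rewrite exchange_big; apply: eq_bigr => t _; rewrite -mulr_suml U1 mul1r.
Qed.

Lemma simplex_mulmx p q (U : 'M[R]_(p, q)) l :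
  col_stochastic U -> simplex l -> simplex (U *m l).
Proof.
move=> [U0 U1] [l0 l1]; split; last by rewrite sum_mulmx_col.
by move=> i; rewrite mxE; apply: sumr_ge0 => t _; apply: mulr_ge0.
Qed.

Lemma conv_col d k (M : 'M[R]_(d, k)) j : conv M (col j M).
Proof.
apply/convE; exists (delta_mx j 0); last by rewrite colE.
split=> [i|]; first by rewrite mxE ler0n.
rewrite (bigD1 j) //= mxE !eqxx big1 ?addr0 // => i /negbTE ij.
by rewrite mxE ij.
Qed.

Lemma conv_convex d k (M : 'M[R]_(d, k)) a b t :
  conv M a -> conv M b -> 0 <= t <= 1 -> conv M (t *: a + (1 - t) *: b).
Proof.
move=> /convE[la [la0 la1] ->] /convE[lb [lb0 lb1] ->] /andP[t0 t1].
apply/convE; exists (t *: la + (1 - t) *: lb); last by rewrite mulmxDr !scalemxAr.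
split=> [i|]; first by rewrite !mxE addr_ge0 // mulr_ge0 // subr_ge0.
under eq_bigr do rewrite !mxE.
by rewrite big_split /= -!mulr_sumr la1 lb1 !mulr1 addrC subrK.
Qed.

Definition mx_of_seq d (s : seq 'cV[R]_d) : 'M[R]_(d, size s) :=
  \matrix_(i < d, j < size s) (nth 0 s j) i 0.

Lemma col_mx_of_seq d (s : seq 'cV[R]_d) (j : 'I_(size s)) :
  col j (mx_of_seq s) = nth 0 s j.
Proof. by apply/matrixP => i j'; rewrite !mxE (ord1 j'). Qed.

Lemma mem_col_mx_of_seq d (s : seq 'cV[R]_d) x :
  x \in s -> exists j, x = col j (mx_of_seq s).
Proof.
move=> xs; exists (Ordinal (etrans (index_mem x s) xs)).
by rewrite col_mx_of_seq nth_index.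
Qed.

Lemma conv_mx_of_seq d (s : seq 'cV[R]_d) x : x \in s -> conv (mx_of_seq s) x.
Proof. by move=> /mem_col_mx_of_seq[j ->]; apply: conv_col. Qed.

Lemma simplex_pos_entry k (l : 'cV[R]_k) : simplex l -> exists j, 0 < l j 0.
Proof.
move=> [l0 l1]; apply: NNPP => Hnone.
suff : \sum_i l i 0 = 0 by rewrite l1 => /eqP; rewrite oner_eq0.
apply: big1 => i _; apply/eqP; rewrite eq_le l0 andbT leNgt.
by apply/negP => li; apply: Hnone; exists i.
Qed.

Lemma exists_neg_entry k (v : 'cV[R]_k) :
  v != 0 -> \sum_i v i 0 = 0 -> exists i, v i 0 < 0.
Proof.
move=> vn0 v_sum; apply: NNPP => Hnone; move/eqP: vn0; apply.
apply/matrixP => i j; rewrite (ord1 j) mxE.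
apply: (psumr_eq0P _ v_sum) => // i' _.
by rewrite leNgt; apply/negP => vi'; apply: Hnone; exists i'.
Qed.

(* A convex combination with some weight [0 < l_j < 1] splits as
   [l_j * M_j + (1 - l_j) * M l'], so an extreme point must be a column. *)
Lemma extreme_conv_col d k (M : 'M[R]_(d, k)) x :
  extreme (conv M) x -> exists j, x = col j M.
Proof.
move=> [/convE[l [l0 l1] xE] x_extreme].
have [j ljpos] := simplex_pos_entry (conj l0 l1).
exists j; pose t := l j 0.
have lj_le1 : t <= 1.
  by rewrite -l1 (bigD1 j) //= lerDl sumr_ge0.
have [lj1|lj_neq1] := eqVneq t 1.
  have l_off : forall i, i != j -> l i 0 = 0.
    apply: (@psumr_eq0P _ _ (fun i => i != j)) => //.
    by move: l1; rewrite (bigD1 j) //= -/t lj1 -{2}(addr0 1) => /addrI.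
  rewrite xE colE; congr (_ *m _); apply/matrixP => i i'.
  rewrite (ord1 i') mxE eqxx andbT.
  by have [->|ij] := eqVneq i j; [rewrite -/t lj1 | rewrite l_off].
have lj_lt1 : t < 1 by rewrite lt_neqAle lj_neq1.
have t1 : 1 - t != 0 by rewrite subr_eq0 eq_sym.
pose l' := (1 - t)^-1 *: (l - t *: delta_mx j 0).
have conv_l' : conv M (M *m l').
  apply/convE; exists l' => //; split=> [i|].
    rewrite !mxE mulr_ge0 ?invr_ge0 ?subr_ge0 //.
    by have [->|ij] := eqVneq i j; rewrite ?eqxx ?mulr1 ?subrr //= mulr0.
  under eq_bigr do rewrite !mxE andbT.
  rewrite -mulr_sumr sumrB l1 (bigD1 j) //= eqxx mulr1 big1 ?addr0 ?mulVf //.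
  by move=> i /negbTE ->; rewrite mulr0.
have [] // := x_extreme (col j M) (M *m l') t (conv_col M j) conv_l' ljpos lj_lt1.
rewrite xE /l' -scalemxAr scalerA mulfV // scale1r mulmxBr -scalemxAr -colE.
by rewrite addrC subrK.
Qed.

Lemma conv_polytope_with_vertices d k (M : 'M[R]_(d, k)) :
  exists2 k', (k' <= k)%N & polytope_with_vertices (conv M) k'.
Proof.
have [w [wu ws] Hw] := exists_uniq_filter (extreme (conv M)) [seq col j M | j <- enum 'I_k].
exists (size w); first by move: ws; rewrite size_map size_enum_ord.
split; first by exists k, M.
exists (mx_of_seq w); split.
  move=> j1 j2 /=; rewrite !col_mx_of_seq => /eqP; rewrite nth_uniq // => /eqP.
  exact: val_inj.
move=> x; split=> [Hx|[j ->]]; last first.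
  by rewrite col_mx_of_seq; have /Hw [] := mem_nth 0 (ltn_ord j).
have [j xE] := extreme_conv_col Hx.
apply: mem_col_mx_of_seq; apply/Hw; split=> //.
by rewrite xE; apply: map_f; rewrite mem_enum.
Qed.

End Convexity.

Section SimplexKernel.
Variable R : realFieldType.
Variables (q k : nat) (C : 'M[R]_(q, k)).

Definition simplex_ker (l : 'cV[R]_k) : Prop := simplex l /\ C *m l = 0.

Definition supported (J : {set 'I_k}) (v : 'cV[R]_k) : Prop :=
  forall i, i \notin J -> v i 0 = 0.

Definition face_point (J : {set 'I_k}) (y : 'cV[R]_k) : Prop :=
  simplex_ker y /\ supported J y.

Definition face_dir (J : {set 'I_k}) (v : 'cV[R]_k) : Prop :=
  [/\ C *m v = 0, \sum_i v i 0 = 0 & supported J v].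

Definition basic_solution (J : {set 'I_k}) (y : 'cV[R]_k) : Prop :=
  face_point J y /\ forall z, face_point J z -> z = y.

Lemma face_point_shrink J i y : face_point J y -> y i 0 = 0 -> face_point (J :\ i) y.
Proof.
move=> [Sy Jy] yi; split=> // j; rewrite in_setD1 negb_and negbK.
by case/orP => [/eqP ->|/Jy].
Qed.

Lemma face_dirN J v : face_dir J v -> face_dir J (- v).
Proof.
move=> [vC v_sum vJ]; split; first by rewrite mulmxN vC oppr0.
  by under eq_bigr do rewrite mxE; rewrite sumrN v_sum oppr0.
by move=> i iJ; rewrite mxE vJ // oppr0.
Qed.

Lemma face_point_sub J y z : face_point J y -> face_point J z -> face_dir J (z - y).
Proof.
move=> [[[_ y1] yC] yJ] [[[_ z1] zC] zJ]; split; first by rewrite mulmxBr zC yC subrr.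
  by under eq_bigr do rewrite !mxE; rewrite sumrB z1 y1 subrr.
by move=> i iJ; rewrite !mxE zJ // yJ // subrr.
Qed.

(* Walk from [y] along [v] up to the first coordinate of [J] that vanishes: the
   step length [t] is [1 / max_{i in J} (- v_i / y_i)]. *)
Lemma face_point_exit J y v :
  face_point J y -> (forall i, i \in J -> 0 < y i 0) -> face_dir J v -> v != 0 ->
  exists2 t, 0 < t &
    face_point J (y + t *: v) /\ exists2 i, i \in J & (y + t *: v) i 0 = 0.
Proof.
move=> [[[y0 y1] yC] yJ] ypos [vC v_sum vJ] vn0.
have [i0 vi0] := exists_neg_entry vn0 v_sum.
have i0J : i0 \in J by apply: contraT => /vJ vi0_eq0; rewrite vi0_eq0 ltxx in vi0.
pose F i := - v i 0 / y i 0.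
have [i1 i1J F_max] := @arg_maxP _ _ _ i0 (fun i => i \in J) F i0J.
pose rho := F i1.
have rho_gt0 : 0 < rho.
  by apply: lt_le_trans (F_max _ i0J); rewrite divr_gt0 ?oppr_gt0 ?ypos.
exists rho^-1; rewrite ?invr_gt0 //; split; last first.
  have vi1 : v i1 0 != 0.
    by apply: contraTneq rho_gt0 => vi1; rewrite /rho /F vi1 oppr0 mul0r ltxx.
  exists i1 => //; rewrite !mxE /rho /F; field.
  by rewrite vi1 lt0r_neq0 ?ypos.
split; last by move=> i iJ; rewrite !mxE yJ // vJ // mulr0 addr0.
split; last by rewrite mulmxDr -scalemxAr yC vC scaler0 addr0.
split=> [i|]; last first.
  by under eq_bigr do rewrite !mxE; rewrite big_split /= -mulr_sumr y1 v_sum mulr0 addr0.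
rewrite !mxE; have [iJ|iJ] := boolP (i \in J); last by rewrite yJ // vJ // mulr0 addr0.
have Fi : F i <= rho := F_max i iJ.
move: Fi; rewrite /F ler_pdivrMr ?ypos // => Fi.
have -> : y i 0 + rho^-1 * v i 0 = rho^-1 * (rho * y i 0 + v i 0).
  by field; rewrite lt0r_neq0.
by apply: mulr_ge0; [rewrite invr_ge0 ltW | lra].
Qed.

Lemma face_point_conv_basic (s : seq 'cV[R]_k) :
  (forall J y, basic_solution J y -> y \in s) ->
  forall J y, face_point J y -> conv (mx_of_seq s) y.
Proof.
move=> s_basic J; move: {2}#|J| (leqnn #|J|) => n; elim: n J => [|n IH] J J_le y Jy.
  have J0 : J = set0 by apply/cards0_eq/eqP; rewrite -leqn0.
  case: Jy => [[[_ y1] _] yJ]; move: y1; rewrite big1 => [/eqP|i _].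
    by rewrite eq_sym oner_eq0.
  by rewrite yJ // J0 in_set0.
have smaller z : face_point J z -> (exists2 i, i \in J & z i 0 = 0) ->
    conv (mx_of_seq s) z.
  move=> Jz [i iJ zi]; apply: (IH (J :\ i)); last exact: face_point_shrink.
  by rewrite -ltnS; move: J_le; rewrite (cardsD1 i J) iJ.
have [[v [vn0 Jv]]|no_dir] := classic (exists v, v != 0 /\ face_dir J v); last first.
  apply/conv_mx_of_seq/(s_basic J); split=> // z Jz; apply: NNPP => zy.
  by apply: no_dir; exists (z - y); rewrite subr_eq0; split; [apply/eqP|apply: face_point_sub].
have [y_zero|y_nz] := classic (exists2 i, i \in J & y i 0 = 0); first exact: smaller.
have ypos i : i \in J -> 0 < y i 0.
  move=> iJ; rewrite lt_def Jy.1.1.1 andbT; apply/eqP => yi.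
  by apply: y_nz; exists i.
have [t1 t1_gt0 [Jy1 y1_zero]] := face_point_exit Jy ypos Jv vn0.
have Nvn0 : - v != 0 by rewrite oppr_eq0.
have [t2 t2_gt0 [Jy2 y2_zero]] := face_point_exit Jy ypos (face_dirN Jv) Nvn0.
have t12_gt0 : 0 < t1 + t2 by rewrite addr_gt0.
pose a := t2 / (t1 + t2).
have -> : y = a *: (y + t1 *: v) + (1 - a) *: (y + t2 *: - v).
  by apply/matrixP => i j; rewrite !mxE /a; field; rewrite lt0r_neq0.
apply: conv_convex; [exact: smaller|exact: smaller|].
by rewrite /a divr_ge0 ?(ltW t2_gt0) ?(ltW t12_gt0) //= ler_pdivrMr // mul1r lerDr ltW.
Qed.

Lemma simplex_ker_conv p (N : 'M[R]_(k, p)) y :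
  (forall j, simplex_ker (col j N)) -> conv N y -> simplex_ker y.
Proof.
move=> N_ker /convE[l l_simplex ->]; split.
  apply: simplex_mulmx l_simplex; split=> [i j|j].
    by have [[/(_ i)] ] := N_ker j; rewrite mxE.
  by have [[_ <-] _] := N_ker j; apply: eq_bigr => i _; rewrite mxE.
suff CN0 : C *m N = 0 by rewrite mulmxA CN0 mul0mx.
apply/matrixP => i j; have [_] := N_ker j; rewrite colE mulmxA -colE => /matrixP/(_ i 0).
by rewrite !mxE.
Qed.

Lemma simplex_ker_polytope : is_polytope simplex_ker.
Proof.
have [s [s_ker s_basic]] := @exists_seq_of_unique _ _ basic_solution
  (fun J y z Jy Jz => Jz.2 _ Jy.1).
exists (size s), (mx_of_seq s) => y; split=> [Sy|].
  apply: (face_point_conv_basic s_basic (J := setT)); split=> // i.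
  by rewrite in_setT.
apply: simplex_ker_conv => j; rewrite col_mx_of_seq.
by have [J [[]]] := s_ker _ (mem_nth 0 (ltn_ord j)).
Qed.

End SimplexKernel.

Section Slice.
Variable R : realFieldType.

Definition mx_image p q (U : 'M[R]_(p, q)) (S : 'cV[R]_q -> Prop) (x : 'cV[R]_p) : Prop :=
  exists2 l, S l & x = U *m l.

Lemma is_polytope_image p q (U : 'M[R]_(p, q)) S :
  is_polytope S -> is_polytope (mx_image U S).
Proof.
move=> [k [N SE]]; exists k, (U *m N) => x; split=> [[l /SE/convE[mu mu_simplex ->] ->]|].
  by apply/convE; exists mu; rewrite ?mulmxA.
move=> /convE[mu mu_simplex ->]; exists (N *m mu); last by rewrite mulmxA.
by apply/SE/convE; exists mu.
Qed.

Lemma slice_conv_col_mx d e k (U : 'M[R]_(d, k)) (C : 'M[R]_(e, k)) :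
  slice (mx_image U (simplex_ker C)) (conv (col_mx U C)).
Proof.
move=> x; split=> -[Qx x_low]; split=> //.
  move: Qx => /convE[l l_simplex xE]; exists l; last by rewrite xE mul_col_mx col_mxKu.
  by split=> //; rewrite -x_low xE mul_col_mx col_mxKd.
move: Qx => [l [l_simplex lC] x_up]; apply/convE; exists l => //.
by rewrite -(vsubmxK x) x_up x_low mul_col_mx lC.
Qed.

Lemma ic_le_image_simplex_ker d e k r (U : 'M[R]_(d, k)) (C : 'M[R]_(e, k)) :
  (k <= r)%N -> ic_le (mx_image U (simplex_ker C)) r.
Proof.
move=> k_le; have [k' k'_le Q_vert] := conv_polytope_with_vertices (col_mx U C).
exists e, k', (conv (col_mx U C)); split; first exact: leq_trans k_le.
by split=> //; apply: slice_conv_col_mx.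
Qed.

End Slice.

Section NonnegFactorization.
Variable R : realFieldType.

Lemma nonneg_rank1_factor n m (B : 'M[R]_(n, m)) : nonneg_mx B -> \rank B = 1%N ->
  exists u : 'cV[R]_n, exists2 w : 'rV[R]_m, nonneg_mx u /\ nonneg_mx w & B = u *m w.
Proof.
move=> B0 rB.
have [c [w Bcw]] : exists (c : 'cV[R]_n) (w : 'rV[R]_m), B = c *m w.
  by move: (mulmx_base B); move: (col_base B) (row_base B); rewrite rB => c w <-; exists c, w.
have BE i j : B i j = c i 0 * w 0 j by rewrite Bcw mxE big_ord1.
have [i0 [j0 B_pos]] : exists i0 j0, 0 < B i0 j0.
  apply: NNPP => Hnone; move: rB; suff -> : B = 0 by rewrite mxrank0.
  apply/matrixP => i j; rewrite mxE; apply/eqP; rewrite eq_le B0 andbT leNgt.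
  by apply/negP => Bij; apply: Hnone; exists i, j.
have /andP[c_nz w_nz] : (c i0 0 != 0) && (w 0 j0 != 0).
  by rewrite -negb_or -mulf_eq0 -BE lt0r_neq0.
exists (col j0 B), ((B i0 j0)^-1 *: row i0 B).
  by split=> i j; rewrite !mxE // mulr_ge0 // invr_ge0 ltW.
apply/matrixP => i j; rewrite !mxE big_ord1 !mxE !BE.
by field; rewrite c_nz w_nz.
Qed.

Lemma nonneg_rank_le_factor n m (A : 'M[R]_(n, m)) r : nonneg_rank_le A r ->
  exists k (U : 'M[R]_(n, k)) (W : 'M[R]_(k, m)),
    [/\ (k <= r)%N, nonneg_mx U, nonneg_mx W & A = U *m W].
Proof.
move=> [k [k_le [B [B_rank1 ->]]]].
have uw_of t : exists uw : 'cV[R]_n * 'rV[R]_m,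
    [/\ nonneg_mx uw.1, nonneg_mx uw.2 & B t = uw.1 *m uw.2].
  have [B0 rB] := B_rank1 t.
  by have [u [w [u0 w0] Buw]] := nonneg_rank1_factor B0 rB; exists (u, w).
have [f f_spec] := fin_all_exists uw_of.
exists k, (\matrix_(a, t) (f t).1 a 0), (\matrix_(t, b) (f t).2 0 b); split=> //.
- by move=> a t; rewrite mxE; have [] := f_spec t.
- by move=> t b; rewrite mxE; have [_ + _] := f_spec t.
apply/matrixP => a b; rewrite summxE mxE; apply: eq_bigr => t _.
by have [_ _ ->] := f_spec t; rewrite !mxE big_ord1.
Qed.

(* Rescale the columns of [U] to sum to one, pushing the scale into [W]; a zero
   column of [U] is replaced by any column of [A], which exists unless [m = 0],
   where the empty factorization works. *)
Lemma col_stochastic_factor n m (A : 'M[R]_(n, m)) r :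
  col_stochastic A -> nonneg_rank_le A r ->
  exists k (U : 'M[R]_(n, k)) (W : 'M[R]_(k, m)),
    [/\ (k <= r)%N, col_stochastic U, col_stochastic W & A = U *m W].
Proof.
case: m A => [|m] A A_stoch A_rank.
  by exists 0%N, 0, 0; split; rewrite ?thinmx0 //; split=> [? j|j]; case: j.
have [k [U [W [k_le U0 W0 AE]]]] := nonneg_rank_le_factor A_rank.
pose s t := \sum_a U a t.
have s0 t : 0 <= s t by apply: sumr_ge0.
pose U' := \matrix_(a < n, t < k) (if s t == 0 then A a 0 else U a t / s t).
have U'_stoch : col_stochastic U'.
  split=> [a t|t]; rewrite /U'.
    by rewrite mxE; case: eqP => _; [apply: A_stoch.1 | apply: divr_ge0].
  under eq_bigr do rewrite mxE.
  case: eqP => [_|/eqP st]; first exact: A_stoch.2.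
  by rewrite -mulr_suml mulfV.
pose W' := \matrix_(t < k, b < m.+1) (s t * W t b).
have AE' : A = U' *m W'.
  apply/matrixP => a b; rewrite [in LHS]AE !mxE; apply: eq_bigr => t _.
  rewrite !mxE; case: eqP => [st|/eqP st]; last by field.
  by rewrite st (psumr_eq0P _ st) // !(mul0r, mulr0).
exists k, U', W'; split=> //; split=> [t b|b]; first by rewrite mxE mulr_ge0.
by rewrite -(sum_mulmx_col W' b U'_stoch.2) -AE' A_stoch.2.
Qed.

Lemma colspan_cokerE n m (A : 'M[R]_(n, m)) (x : 'cV[R]_n) :
  (exists y, x = A *m y) <-> (cokermx A^T)^T *m x = 0.
Proof.
have -> : (cokermx A^T)^T *m x = (x^T *m cokermx A^T)^T by rewrite [RHS]trmx_mul trmxK.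
split=> [[y ->]|x_ker].
  by move: (submxMl y^T A^T); rewrite submxE -trmx_mul => /eqP ->; rewrite trmx0.
have /submxP[D xD] : (x^T <= A^T)%MS.
  by rewrite submxE -[_ *m _]trmxK x_ker trmx0.
by exists D^T; rewrite -[x]trmxK xD trmx_mul trmxK.
Qed.

End NonnegFactorization.

Theorem proposition1 (R : realFieldType) (n m r : nat) (A : 'M[R]_(n, m)) :
  col_stochastic A -> nonneg_rank_le A r ->
  exists P : 'cV[R]_n -> Prop,
    is_polytope P /\
    (forall x, P_in A x -> P x) /\
    (forall x, P x -> P_out A x) /\
    ic_le P r.
Proof.
move=> A_stoch A_rank.
have [k [U [W [k_le U_stoch W_stoch AE]]]] := col_stochastic_factor A_stoch A_rank.
pose C := (cokermx A^T)^T *m U.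
exists (mx_image U (simplex_ker C)); split; [|split; [|split]].
- exact/is_polytope_image/simplex_ker_polytope.
- move=> x /convE[mu mu_simplex ->]; exists (W *m mu); last by rewrite AE mulmxA.
  split; first exact: simplex_mulmx.
  by rewrite /C -mulmxA (mulmxA U) -AE; apply/colspan_cokerE; exists mu.
- move=> x [l [l_simplex lC] ->]; split; first exact: simplex_mulmx.
  by apply/colspan_cokerE; rewrite mulmxA.
- exact: ic_le_image_simplex_ker.
Qed.
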